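(* Let $X_n,Y_n,Z_n,W_n$ be chosen as real numbers with $Q_n(1)=1$, $Q_n'(1)=1$, $Q_n(s^\nu)=s^\nu$, $Q_n'(s^\nu)=1$ and with $(X_n-1)/s^\nu$, $Y_n/s^\nu$, $(Z_n-1)/s^\nu$, $W_n/s^\nu$ converging as $s\to0^+$ to $\frac{d_1(d_1-3)(d_n-1)}{(d_1-1)^2d_n}$, $\frac{2d_1(d_n-1)}{(d_1-1)d_n}$, $0$, $\frac{d_n-1}{d_n}$ respectively. Let $\varphi(z)=s^\nu/z$ and $\widehat Q_n=\varphi\circ Q_n\circ\varphi^{-1}$. Then, as $s\to0^+$, $Q_n\to h_{d_1}$ and $\widehat Q_n\to h_{d_n}$ locally uniformly on $\widehat{\mathbb{C}}\setminus\{0\}$, where $h_d(z)=\frac{dz^d}{(d-1)z^d+1}$.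
   Context: $n\ge3$ odd, $d_1,\dots,d_n$ positive integers with $\sum1/d_i<1$, $d_{\max}=\max_id_i$, $D_i=d_i+d_{i+1}$, $\tau=\bigl(d_1d_nd_{\max}^{2(d_1-d_n)/d_1}\bigr)^{1/\sum_{i=1}^{n-1}(d_n/d_i)}$, $\nu=\frac{d_n}{d_n-1}\sum_{i=1}^{n-1}\frac1{d_i}$, $b_1=(d_{\max}^2\tau s)^{1/d_1}$, $b_i=(\tau s)^{1/d_i}b_{i-1}$, and $Q_n(z)=\frac{d_1z^{d_n}}{(d_1-1)X_nz^{d_1}+Y_nz+Z_n}\prod_{i=1}^{n-1}(z^{D_i}-b_i^{D_i})^{(-1)^{i-1}}+W_n$. Such $X_n,\dots,W_n$ exist for small $s$. *)

From Stdlib Require Import Reals Lra.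
Open Scope R_scope.

Definition C := (R * R)%type.
Definition RC (x : R) : C := (x, 0).
Definition C0 : C := (0, 0).
Definition C1 : C := (1, 0).
Definition Cadd (u v : C) : C := (fst u + fst v, snd u + snd v).
Definition Csub (u v : C) : C := (fst u - fst v, snd u - snd v).
Definition Cmul (u v : C) : C :=
  (fst u * fst v - snd u * snd v, fst u * snd v + snd u * fst v).
Fixpoint Cpow (u : C) (k : nat) : C :=
  match k with O => C1 | S k' => Cmul u (Cpow u k') end.
Definition Cnorm (u : C) : R := sqrt (fst u ^ 2 + snd u ^ 2).
Definition Cinv (u : C) : C :=
  let r := fst u ^ 2 + snd u ^ 2 in (fst u / r, - snd u / r).

(** Points of the Riemann sphere in homogeneous coordinates [a : b]
    (value a/b; [a:0] = infinity); chordal distance between them. *)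
Definition chord (p q : C * C) : R :=
  let (a, b) := p in let (c, d) := q in
  Cnorm (Csub (Cmul a d) (Cmul b c)) /
  (sqrt (Cnorm a ^ 2 + Cnorm b ^ 2) * sqrt (Cnorm c ^ 2 + Cnorm d ^ 2)).

Fixpoint sum1 (f : nat -> R) (m : nat) : R :=
  match m with O => 0 | S k => sum1 f k + f (S k) end.
Fixpoint prodC1 (f : nat -> C) (m : nat) : C :=
  match m with O => C1 | S k => Cmul (prodC1 f k) (f (S k)) end.
Fixpoint max1 (f : nat -> nat) (m : nat) : nat :=
  match m with O => 0%nat | S k => Nat.max (max1 f k) (f (S k)) end.

Definition dmax (d : nat -> nat) (n : nat) : R := INR (max1 d n).
Definition DD (d : nat -> nat) (i : nat) : nat := (d i + d (S i))%nat.

Definition tau (d : nat -> nat) (n : nat) : R :=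
  Rpower (INR (d 1%nat) * INR (d n) *
          Rpower (dmax d n) (2 * (INR (d 1%nat) - INR (d n)) / INR (d 1%nat)))
         (1 / sum1 (fun i => INR (d n) / INR (d i)) (n - 1)).

Definition nu (d : nat -> nat) (n : nat) : R :=
  INR (d n) / (INR (d n) - 1) * sum1 (fun i => 1 / INR (d i)) (n - 1).

Fixpoint bseq (d : nat -> nat) (n : nat) (s : R) (i : nat) : R :=
  match i with
  | O => 1
  | S k =>
      match k with
      | O => Rpower (dmax d n ^ 2 * tau d n * s) (1 / INR (d 1%nat))
      | S _ => Rpower (tau d n * s) (1 / INR (d i)) * bseq d n s k
      end
  end.

Definition fac (d : nat -> nat) (n : nat) (s : R) (i : nat) (z : C) : C :=
  Csub (Cpow z (DD d i)) (RC (bseq d n s i ^ DD d i)).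

(** Q_n = Qnum / Qden, where (since (-1)^(i-1) = 1 iff i odd):
    Qden = ((d1-1) X z^d1 + Y z + Z) * prod_{i<=n-1, i even} fac_i
    Qnum = d1 z^dn * prod_{i<=n-1, i odd} fac_i + W * Qden *)
Definition Qden (d : nat -> nat) (n : nat) (X Y Z : R -> R) (s : R) (z : C) : C :=
  Cmul (Cadd (Cadd (Cmul (RC ((INR (d 1%nat) - 1) * X s)) (Cpow z (d 1%nat)))
                   (Cmul (RC (Y s)) z))
             (RC (Z s)))
       (prodC1 (fun i => if Nat.even i then fac d n s i z else C1) (n - 1)).

Definition Qnum (d : nat -> nat) (n : nat) (X Y Z W : R -> R) (s : R) (z : C) : C :=
  Cadd (Cmul (RC (INR (d 1%nat)))
             (Cmul (Cpow z (d n))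
                   (prodC1 (fun i => if Nat.odd i then fac d n s i z else C1) (n - 1))))
       (Cmul (RC (W s)) (Qden d n X Y Z s z)).

Definition Qhom d n X Y Z W s (z : C) : C * C :=
  (Qnum d n X Y Z W s z, Qden d n X Y Z s z).

(** Q_n restricted to the real line (real coefficients) *)
Definition Qreal d n X Y Z W s (x : R) : R :=
  fst (Qnum d n X Y Z W s (RC x)) / fst (Qden d n X Y Z s (RC x)).

(** hat Q_n = phi o Q_n o phi^{-1}, phi(z) = s^nu / z (phi^{-1} = phi):
    for w = s^nu / z and Q_n(w) = [N : M], hat Q_n(z) = [s^nu M : N]. *)
Definition Qhat_hom d n X Y Z W s (z : C) : C * C :=
  let t := Rpower s (nu d n) in
  let w := Cmul (RC t) (Cinv z) in
  (Cmul (RC t) (Qden d n X Y Z s w), Qnum d n X Y Z W s w).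

Definition hhom (k : nat) (z : C) : C * C :=
  (Cmul (RC (INR k)) (Cpow z k),
   Cadd (Cmul (RC (INR k - 1)) (Cpow z k)) C1).

(** Compact subsets of Chat\{0} are exactly the closed
    subsets of {|z| >= r} u {oo}; by continuity of the extended maps it
    suffices to take the sup over finite z with |z| >= r, omitting the
    (finitely many) common zeros of numerator and denominator. *)
Definition locunif_conv (F : R -> C -> C * C) (G : C -> C * C) : Prop :=
  forall r, 0 < r -> forall eps, 0 < eps ->
  exists delta, 0 < delta /\
  forall s, 0 < s < delta -> forall z, r <= Cnorm z ->
    ~ (fst (F s z) = C0 /\ snd (F s z) = C0) ->
    chord (F s z) (G z) < eps.

Definition lim0p (f : R -> R) (L : R) : Prop :=
  forall eps, 0 < eps -> exists delta, 0 < delta /\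
  forall s, 0 < s < delta -> Rabs (f s - L) < eps.

From Stdlib Require Import Reals Lra Lia.
From Coquelicot Require Import Coquelicot.
From Pilot Require Import Defs.
Open Scope R_scope.

(* For |z| >= r every factor z^{D_i} - b_i^{D_i} of Q_n is z^{D_i} (1 - (b_i/z)^{D_i}) with
   b_i -> 0, and since n is odd the products of the z^{D_i} over odd and over even i differ
   by exactly z^{d_1 - d_n}.  Hence Q_n(z) is uniformly close to
   d_1 z^{d_1} / ((d_1 - 1) X z^{d_1} + Y z + Z) + W, which tends to h_{d_1} because X, Z -> 1
   and Y, W -> 0.

   For the conjugate, put w = s^nu / z, which is uniformly small on |z| >= r.  Near 0 every
   factor is -b_i^{D_i} (1 - (w/b_i)^{D_i}), and w/b_i -> 0 because nu exceeds every partial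
   sum 1/d_1 + ... + 1/d_i with i < n.  The choice of tau makes the products of the constants
   -b_i^{D_i} over even and over odd indices differ by exactly the factor d_1 d_n s^{nu (d_n - 1)};
   together with W ~ (d_n - 1)/d_n s^nu this turns hat Q_n(z) into a perturbation of h_{d_n}(z). *)

Lemma Cmul_Cmult : Defs.Cmul = Cmult. Proof. reflexivity. Qed.
Lemma Cadd_Cplus : Defs.Cadd = Cplus. Proof. reflexivity. Qed.
Lemma Csub_Cminus : Defs.Csub = Cminus. Proof. reflexivity. Qed.
Lemma RC_RtoC : RC = RtoC. Proof. reflexivity. Qed.
Lemma Cpow_Cpow : Defs.Cpow = Complex.Cpow. Proof. reflexivity. Qed.
Lemma Cinv_Cinv : Defs.Cinv = Complex.Cinv. Proof. reflexivity. Qed.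
Lemma C1_RtoC : C1 = RtoC 1. Proof. reflexivity. Qed.
Lemma Cnorm_Cmod : Cnorm = Cmod. Proof. reflexivity. Qed.

Ltac to_Complex :=
  rewrite ?Cmul_Cmult, ?Cadd_Cplus, ?Csub_Cminus, ?RC_RtoC, ?Cpow_Cpow, ?Cinv_Cinv.

(* [ring] and [field] are registered for [Complex.C], not for its alias [Defs.C]. *)
Ltac Complex_eq := match goal with |- ?a = ?b => change (@eq Complex.C a b) end.

Lemma pow_le_self (x : R) (k : nat) : 0 <= x <= 1 -> (1 <= k)%nat -> x ^ k <= x.
Proof.
  intros Hx Hk. destruct k as [|k]; [lia|]. cbn [pow].
  assert (x ^ k <= 1) by (rewrite <- (pow1 k); apply pow_incr; lra).
  pose proof (pow_le x k). nra.
Qed.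

Lemma exp_pow (x : R) (k : nat) : exp x ^ k = exp (INR k * x).
Proof.
  induction k as [|k IH]; cbn [pow]; [rewrite Rmult_0_l, exp_0; reflexivity|].
  rewrite IH, <- exp_plus, S_INR. f_equal. ring.
Qed.

Lemma exp_div (x r : R) : 0 < r -> exp x / r = exp (x - ln r).
Proof. intros Hr. unfold Rminus. rewrite exp_plus, exp_Ropp, exp_ln by exact Hr. reflexivity. Qed.

Lemma Rdiv_le_compat_r_nonneg (x y q : R) : x <= y -> 0 <= q -> x / q <= y / q.
Proof.
  intros Hxy Hq. destruct (Req_dec q 0) as [->|Hq0].
  - rewrite !Rdiv_0_r. lra.
  - apply Rmult_le_compat_r; [apply Rlt_le, Rinv_0_lt_compat; lra|exact Hxy].
Qed.

Lemma Cmod_ge_0_pow (z : Complex.C) (k : nat) : 0 <= Cmod z ^ k.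
Proof. apply pow_le, Cmod_ge_0. Qed.

Lemma Cmod_RtoC_mul (x : R) (u : Complex.C) : Cmod (RtoC x * u) = Rabs x * Cmod u.
Proof. rewrite Cmod_mult, Cmod_R. reflexivity. Qed.

Lemma Cmod_le_near_1 (u : Complex.C) (a : R) : Cmod (u - 1) <= a -> Cmod u <= 1 + a.
Proof.
  intros H. replace u with ((u - 1) + 1)%C by ring.
  eapply Rle_trans; [apply Cmod_triangle|]. rewrite Cmod_1. lra.
Qed.

Lemma Cmod_mul_sub_le (a b c : Complex.C) :
  Cmod (a * b - c) <= Cmod (a - c) * Cmod b + Cmod c * Cmod (b - 1).
Proof.
  replace (a * b - c)%C with ((a - c) * b + c * (b - 1))%C by ring.
  eapply Rle_trans; [apply Cmod_triangle|]. rewrite !Cmod_mult. lra.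
Qed.

(** * The chordal metric *)

Definition hom_norm (a b : Complex.C) : R := sqrt (Cmod a ^ 2 + Cmod b ^ 2).

Lemma Cmod_le_hom_norm_l (a b : Complex.C) : Cmod a <= hom_norm a b.
Proof.
  unfold hom_norm. rewrite <- (sqrt_pow2 (Cmod a)) at 1 by apply Cmod_ge_0.
  apply sqrt_le_1_alt. pose proof (pow2_ge_0 (Cmod b)). lra.
Qed.

Lemma Cmod_le_hom_norm_r (a b : Complex.C) : Cmod b <= hom_norm a b.
Proof. unfold hom_norm. rewrite Rplus_comm. apply Cmod_le_hom_norm_l. Qed.

Lemma chord_le (a b c d : Complex.C) :
  chord (a, b) (c, d) <= (Cmod (a - c) + Cmod (b - d)) / hom_norm c d.
Proof.
  unfold chord. rewrite Cnorm_Cmod. fold (hom_norm a b) (hom_norm c d).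
  change (Csub (Cmul a d) (Cmul b c)) with (a * d - b * c)%C.
  pose proof (Cmod_le_hom_norm_l a b). pose proof (Cmod_le_hom_norm_r a b).
  pose proof (Cmod_ge_0 (a - c)). pose proof (Cmod_ge_0 (b - d)).
  assert (Hcross : Cmod (a * d - b * c) <= hom_norm a b * (Cmod (a - c) + Cmod (b - d))).
  { replace (a * d - b * c)%C with (a * - (b - d) + b * (a - c))%C by ring.
    eapply Rle_trans; [apply Cmod_triangle|]. rewrite !Cmod_mult, Cmod_opp. nra. }
  rewrite Rdiv_mult_distr. apply Rdiv_le_compat_r_nonneg; [|apply sqrt_pos].
  destruct (Req_dec (hom_norm a b) 0) as [E|E].
  - rewrite E, Rdiv_0_r. lra.
  - assert (0 <= hom_norm a b) by apply sqrt_pos.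
    apply Rmult_le_reg_r with (hom_norm a b); [lra|].
    unfold Rdiv. rewrite Rmult_assoc, Rinv_l, Rmult_1_r by exact E. lra.
Qed.

Lemma chord_scale_l (l a b : Complex.C) (q : Complex.C * Complex.C) :
  l <> 0%C -> chord ((l * a)%C, (l * b)%C) q = chord (a, b) q.
Proof.
  intros Hl. destruct q as [c d]. unfold chord. rewrite Cnorm_Cmod.
  change (Csub (Cmul ?x ?y) (Cmul ?u ?v)) with (x * y - u * v)%C.
  replace (l * a * d - l * b * c)%C with (l * (a * d - b * c))%C by ring.
  assert (Hp : 0 < Cmod l) by (apply Cmod_gt_0; exact Hl).
  replace (Cmod (l * a) ^ 2 + Cmod (l * b) ^ 2) with (Cmod l ^ 2 * (Cmod a ^ 2 + Cmod b ^ 2))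
    by (rewrite !Cmod_mult; ring).
  rewrite Cmod_mult, sqrt_mult_alt, sqrt_pow2 by (lra || apply pow2_ge_0).
  rewrite Rmult_assoc, Rdiv_mult_l_l by lra. reflexivity.
Qed.

Lemma hom_norm_hhom_ge (k : nat) (z : Complex.C) : (1 <= k)%nat ->
  1 / 2 <= hom_norm (fst (hhom k z)) (snd (hhom k z)) /\
  Cmod z ^ k <= hom_norm (fst (hhom k z)) (snd (hhom k z)).
Proof.
  intros Hk. cbn [hhom fst snd]. to_Complex. rewrite C1_RtoC.
  set (c := (RtoC (INR k) * z ^ k)%C). set (d := (RtoC (INR k - 1) * z ^ k + 1)%C).
  pose proof (Cmod_le_hom_norm_l c d) as Hc. pose proof (Cmod_le_hom_norm_r c d) as Hd.
  assert (Kp : 1 <= INR k) by (apply (le_INR 1); exact Hk).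
  set (q := (INR k - 1) / INR k).
  assert (Hq : 0 <= q <= 1).
  { unfold q. split; [apply Rdiv_le_0_compat; lra|].
    apply Rmult_le_reg_r with (INR k); [lra|]. unfold Rdiv. rewrite Rmult_assoc, Rinv_l; lra. }
  split.
  - assert (E : (RtoC 1 = d - RtoC q * c)%C).
    { unfold c, d, q. rewrite RtoC_div, RtoC_minus by lra. Complex_eq. field.
      intro E0. apply RtoC_inj in E0. lra. }
    assert (1 <= Cmod d + Cmod c).
    { rewrite <- Cmod_1, E. eapply Rle_trans; [apply Cmod_triangle|].
      rewrite Cmod_opp, Cmod_RtoC_mul, Rabs_pos_eq by lra.
      pose proof (Cmod_ge_0 c). nra. }
    lra.
  - eapply Rle_trans; [|exact Hc]. unfold c.
    rewrite Cmod_RtoC_mul, Cmod_pow, Rabs_pos_eq by lra.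
    pose proof (Cmod_ge_0_pow z k). nra.
Qed.

Lemma chord_hhom_le (k : nat) (z a b : Complex.C) (eta : R) :
  (1 <= k)%nat -> 0 <= eta ->
  Cmod (a - fst (hhom k z)) <= eta * (Cmod z ^ k + Cmod z + 1) ->
  Cmod (b - snd (hhom k z)) <= eta * (Cmod z ^ k + Cmod z + 1) ->
  chord (a, b) (hhom k z) <= 12 * eta.
Proof.
  intros Hk He Ha Hb. destruct (hom_norm_hhom_ge k z Hk) as [N1 N2].
  destruct (hhom k z) as [c d]. cbn [fst snd] in *.
  eapply Rle_trans; [apply chord_le|].
  assert (Hz : Cmod z <= 1 + Cmod z ^ k).
  { destruct (Rle_dec (Cmod z) 1); [pose proof (Cmod_ge_0_pow z k); lra|].
    assert (Cmod z ^ 1 <= Cmod z ^ k) by (apply Rle_pow; lra || lia).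
    rewrite pow_1 in *. lra. }
  apply Rmult_le_reg_r with (hom_norm c d); [lra|].
  unfold Rdiv. rewrite Rmult_assoc, Rinv_l, Rmult_1_r by lra.
  assert (eta * (Cmod z ^ k + Cmod z + 1) <= eta * (6 * hom_norm c d))
    by (apply Rmult_le_compat_l; lra).
  lra.
Qed.

Lemma Cmod_hhom_den_le (k : nat) (z : Complex.C) : (1 <= k)%nat ->
  Cmod (snd (hhom k z)) <= INR k * (Cmod z ^ k + Cmod z + 1).
Proof.
  intros Hk. assert (Kp : 1 <= INR k) by (apply (le_INR 1); exact Hk).
  cbn [hhom snd]. to_Complex. rewrite C1_RtoC. eapply Rle_trans; [apply Cmod_triangle|].
  rewrite Cmod_RtoC_mul, Cmod_pow, Cmod_1, Rabs_pos_eq by lra.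
  pose proof (Cmod_ge_0_pow z k). pose proof (Cmod_ge_0 z). nra.
Qed.

Lemma chord_hhom_perturb_num (k : nat) (z p v : Complex.C) (w alpha : R) :
  (1 <= k)%nat -> 0 <= alpha <= 1 ->
  Cmod (p - 1) <= alpha -> Rabs w <= alpha ->
  Cmod (v - snd (hhom k z)) <= INR k * alpha * (Cmod z ^ k + Cmod z + 1) ->
  chord ((RtoC (INR k) * z ^ k * p + RtoC w * v)%C, v) (hhom k z) <= 36 * INR k * alpha.
Proof.
  intros Hk Ha Hp Hw Hv. assert (Kp : 1 <= INR k) by (apply (le_INR 1); exact Hk).
  set (M := Cmod z ^ k + Cmod z + 1) in *.
  assert (HzM : Cmod z ^ k <= M) by (pose proof (Cmod_ge_0 z); unfold M; lra).
  assert (HM1 : 1 <= M)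
    by (pose proof (Cmod_ge_0 z); pose proof (Cmod_ge_0_pow z k); unfold M; lra).
  assert (HT := Cmod_hhom_den_le k z Hk). fold M in HT.
  assert (HvM : Cmod v <= 2 * INR k * M).
  { replace v with ((v - snd (hhom k z)) + snd (hhom k z))%C by ring.
    eapply Rle_trans; [apply Cmod_triangle|].
    assert (0 <= INR k * M) by nra.
    assert (INR k * alpha * M <= INR k * M) by nra.
    lra. }
  replace (36 * INR k * alpha) with (12 * (3 * INR k * alpha)) by ring.
  apply chord_hhom_le; [exact Hk|nra| |].
  - cbn [hhom fst]. to_Complex.
    replace (RtoC (INR k) * z ^ k * p + RtoC w * v - RtoC (INR k) * z ^ k)%C
      with (RtoC (INR k) * z ^ k * (p - 1) + RtoC w * v)%C by ring.
    eapply Rle_trans; [apply Cmod_triangle|].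
    rewrite !Cmod_mult, !Cmod_R, Cmod_pow, (Rabs_pos_eq (INR k)) by lra. fold M.
    pose proof (Cmod_ge_0_pow z k). pose proof (Cmod_ge_0 v). pose proof (Cmod_ge_0 (p - 1)).
    assert (INR k * Cmod z ^ k * Cmod (p - 1) <= INR k * M * alpha)
      by (apply Rmult_le_compat; nra).
    assert (Rabs w * Cmod v <= alpha * (2 * INR k * M))
      by (apply Rmult_le_compat; try apply Rabs_pos; lra).
    nra.
  - assert (INR k * alpha * M <= 3 * INR k * alpha * M).
    { assert (0 <= INR k * alpha * M) by (apply Rmult_le_pos; nra). lra. }
    fold M. lra.
Qed.

Lemma chord_hhom_perturb_den (k : nat) (z u v : Complex.C) (c alpha : R) :
  (1 <= k)%nat -> 0 <= alpha <= 1 ->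
  Cmod (u - 1) <= alpha -> Cmod (v - 1) <= alpha -> Rabs (c - (INR k - 1)) <= INR k * alpha ->
  chord ((RtoC (INR k) * u * z ^ k)%C, (RtoC c * u * z ^ k + v)%C) (hhom k z)
  <= 36 * INR k * alpha.
Proof.
  intros Hk Ha Hu Hv Hc. assert (Kp : 1 <= INR k) by (apply (le_INR 1); exact Hk).
  set (M := Cmod z ^ k + Cmod z + 1).
  pose proof (Cmod_ge_0_pow z k) as Hz. pose proof (Cmod_ge_0 z). pose proof (Cmod_ge_0 (u - 1)).
  assert (HzM : Cmod z ^ k + 1 <= M) by (unfold M; lra).
  assert (HuM : Cmod u <= 2) by (apply Cmod_le_near_1 in Hu; lra).
  replace (36 * INR k * alpha) with (12 * (3 * INR k * alpha)) by ring.
  apply chord_hhom_le; [exact Hk|nra| |]; cbn [hhom fst snd]; to_Complex; rewrite ?C1_RtoC.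
  - replace (RtoC (INR k) * u * z ^ k - RtoC (INR k) * z ^ k)%C
      with (RtoC (INR k) * (u - 1) * z ^ k)%C by ring.
    rewrite !Cmod_mult, Cmod_R, Cmod_pow, (Rabs_pos_eq (INR k)) by lra. fold M.
    assert (INR k * Cmod (u - 1) <= INR k * alpha) by (apply Rmult_le_compat_l; lra).
    assert (INR k * Cmod (u - 1) * Cmod z ^ k <= INR k * alpha * M)
      by (apply Rmult_le_compat; nra).
    assert (0 <= INR k * alpha * M) by (apply Rmult_le_pos; nra).
    lra.
  - replace (RtoC c * u * z ^ k + v - (RtoC (INR k - 1) * z ^ k + 1))%C
      with (RtoC (c - (INR k - 1)) * u * z ^ k + RtoC (INR k - 1) * (u - 1) * z ^ k + (v - 1))%C
      by (rewrite RtoC_minus; ring).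
    eapply Rle_trans; [apply Cmod_triangle|].
    eapply Rle_trans; [apply Rplus_le_compat_r, Cmod_triangle|].
    rewrite !Cmod_mult, !Cmod_R, Cmod_pow, (Rabs_pos_eq (INR k - 1)) by lra. fold M.
    pose proof (Cmod_ge_0 u). pose proof (Rabs_pos (c - (INR k - 1))).
    assert (Rabs (c - (INR k - 1)) * Cmod u <= INR k * alpha * 2) by (apply Rmult_le_compat; lra).
    assert ((INR k - 1) * Cmod (u - 1) <= INR k * alpha) by nra.
    assert (0 <= INR k * alpha) by nra.
    assert (Rabs (c - (INR k - 1)) * Cmod u * Cmod z ^ k <= INR k * alpha * 2 * Cmod z ^ k)
      by (apply Rmult_le_compat_r; lra).
    assert ((INR k - 1) * Cmod (u - 1) * Cmod z ^ k <= INR k * alpha * Cmod z ^ k)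
      by (apply Rmult_le_compat_r; lra).
    unfold M. nra.
Qed.

Lemma sum1_le_index (f : nat -> R) (k m : nat) :
  (forall i, 0 <= f i) -> (k <= m)%nat -> sum1 f k <= sum1 f m.
Proof.
  intros Hf Hkm. induction Hkm as [|m Hkm IH]; [lra|].
  cbn [sum1]. pose proof (Hf (S m)). lra.
Qed.

Lemma sum1_pos (f : nat -> R) (m : nat) :
  (forall i, (1 <= i <= m)%nat -> 0 < f i) -> (1 <= m)%nat -> 0 < sum1 f m.
Proof.
  induction m as [|m IH]; intros Hf Hm; [lia|]. cbn [sum1].
  assert (0 < f (S m)) by (apply Hf; lia).
  destruct m as [|m]; [cbn [sum1]; lra|].
  assert (0 < sum1 f (S m)) by (apply IH; [intros; apply Hf|]; lia). lra.
Qed.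

Lemma term_le_sum1 (f : nat -> R) (i m : nat) :
  (forall k, 0 <= f k) -> (1 <= i <= m)%nat -> f i <= sum1 f m.
Proof.
  intros Hf Hi. destruct i as [|i]; [lia|].
  apply Rle_trans with (sum1 f (S i)); [|apply sum1_le_index; [exact Hf|lia]].
  cbn [sum1]. assert (0 <= sum1 f i) by (apply (sum1_le_index f 0); [exact Hf|lia]).
  lra.
Qed.

Lemma max1_ge (f : nat -> nat) (i m : nat) : (1 <= i <= m)%nat -> (f i <= max1 f m)%nat.
Proof.
  induction m as [|m IH]; intros Hi; [lia|]. cbn [max1].
  destruct (Nat.eq_dec i (S m)) as [->|]; [lia|].
  specialize (IH ltac:(lia)). lia.
Qed.

Lemma one_div_INR_nonneg (m : nat) : 0 <= 1 / INR m.
Proof.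
  destruct m as [|m]; [rewrite Rdiv_0_r; lra|].
  apply Rlt_le, Rdiv_lt_0_compat; [lra|apply lt_0_INR; lia].
Qed.

Fixpoint prodR1 (P : nat -> bool) (x : nat -> R) (m : nat) : R :=
  match m with O => 1 | S k => prodR1 P x k * (if P (S k) then x (S k) else 1) end.

Fixpoint sumN1 (P : nat -> bool) (e : nat -> nat) (m : nat) : nat :=
  match m with O => O | S k => (sumN1 P e k + (if P (S k) then e (S k) else O))%nat end.

Lemma prodC1_mul (P : nat -> bool) (F f g : nat -> Complex.C) (m : nat) :
  (forall i, (1 <= i <= m)%nat -> P i = true -> F i = (f i * g i)%C) ->
  prodC1 (fun i => if P i then F i else C1) m =
  (prodC1 (fun i => if P i then f i else C1) m * prodC1 (fun i => if P i then g i else C1) m)%C.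
Proof.
  induction m as [|m IH]; intros H; cbn [prodC1]; to_Complex.
  - rewrite C1_RtoC. Complex_eq. ring.
  - rewrite IH by (intros; apply H; lia || auto).
    destruct (P (S m)) eqn:E.
    + rewrite H by (lia || auto). Complex_eq. ring.
    + rewrite C1_RtoC. Complex_eq. ring.
Qed.

Lemma prodC1_RtoC (P : nat -> bool) (x : nat -> R) (m : nat) :
  prodC1 (fun i => if P i then RtoC (x i) else C1) m = RtoC (prodR1 P x m).
Proof.
  induction m as [|m IH]; cbn [prodC1 prodR1]; [reflexivity|].
  to_Complex. rewrite IH, RtoC_mult. destruct (P (S m)); reflexivity.
Qed.

Lemma prodC1_Cpow (P : nat -> bool) (z : Complex.C) (e : nat -> nat) (m : nat) :
  prodC1 (fun i => if P i then (z ^ e i)%C else C1) m = (z ^ sumN1 P e m)%C.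
Proof.
  induction m as [|m IH]; cbn [prodC1 sumN1]; [reflexivity|].
  to_Complex. rewrite IH, Cpow_add_r. destruct (P (S m)); [reflexivity|].
  rewrite C1_RtoC. Complex_eq. simpl. ring.
Qed.

Lemma prodR1_neq_0 (P : nat -> bool) (x : nat -> R) (m : nat) :
  (forall i, (1 <= i <= m)%nat -> x i <> 0) -> prodR1 P x m <> 0.
Proof.
  induction m as [|m IH]; intros H; cbn [prodR1]; [lra|].
  apply Rmult_integral_contrapositive_currified; [apply IH; intros; apply H; lia|].
  destruct (P (S m)); [apply H; lia|lra].
Qed.

Lemma prodC1_near_1 (g : nat -> Complex.C) (delta : R) (m : nat) :
  0 <= delta <= 1 -> (forall i, (1 <= i <= m)%nat -> Cmod (g i - 1) <= delta) ->
  Cmod (prodC1 g m - 1) <= delta * (2 ^ m - 1).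
Proof.
  intros Hd. induction m as [|m IH]; intros H; cbn [prodC1]; to_Complex.
  - rewrite C1_RtoC. replace (RtoC 1 - 1)%C with (RtoC 0) by ring. rewrite Cmod_0. lra.
  - set (p := prodC1 g m).
    assert (Hp : Cmod (p - 1) <= delta * (2 ^ m - 1)) by (apply IH; intros; apply H; lia).
    assert (Hg : Cmod (g (S m) - 1) <= delta) by (apply H; lia).
    assert (H2m : 1 <= 2 ^ m) by (apply pow_R1_Rle; lra).
    replace (p * g (S m) - 1)%C with (p * (g (S m) - 1) + (p - 1))%C by ring.
    eapply Rle_trans; [apply Cmod_triangle|]. rewrite Cmod_mult.
    assert (Cmod p * Cmod (g (S m) - 1) <= (1 + delta * (2 ^ m - 1)) * delta)
      by (apply Rmult_le_compat; auto using Cmod_ge_0, Cmod_le_near_1).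
    assert (0 <= delta * (2 ^ m - 1)) by nra.
    change (2 ^ S m) with (2 * 2 ^ m). nra.
Qed.

Lemma prodC1_one_sub_pow_near_1 (P : nat -> bool) (u : nat -> Complex.C) (e : nat -> nat)
    (rho : R) (m : nat) :
  0 < rho <= 1 ->
  (forall i, (1 <= i <= m)%nat -> Cmod (u i) <= rho / 2 ^ m /\ (1 <= e i)%nat) ->
  Cmod (prodC1 (fun i => if P i then (1 - u i ^ e i)%C else C1) m - 1) <= rho.
Proof.
  intros Hr Hu. assert (H2m : 1 <= 2 ^ m) by (apply pow_R1_Rle; lra).
  assert (Hd : 0 < rho / 2 ^ m <= 1).
  { split; [apply Rdiv_lt_0_compat; lra|].
    apply Rmult_le_reg_r with (2 ^ m); [lra|]. unfold Rdiv. rewrite Rmult_assoc, Rinv_l; lra. }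
  eapply Rle_trans; [apply (prodC1_near_1 _ (rho / 2 ^ m)); [lra|]|].
  - intros i Hi. destruct (Hu i Hi) as [Hui Hei]. destruct (P i); to_Complex.
    + replace (1 - u i ^ e i - 1)%C with (- u i ^ e i)%C by ring.
      rewrite Cmod_opp, Cmod_pow. pose proof (Cmod_ge_0 (u i)).
      assert (Cmod (u i) ^ e i <= Cmod (u i)) by (apply pow_le_self; lra || lia).
      lra.
    + rewrite C1_RtoC. replace (RtoC 1 - 1)%C with (RtoC 0) by ring. rewrite Cmod_0. lra.
  - unfold Rdiv. rewrite Rmult_minus_distr_l, Rmult_assoc, Rinv_l, Rmult_1_r by lra.
    pose proof (Rinv_0_lt_compat (2 ^ m)). nra.
Qed.

Lemma sumN1_parity_pairs (e : nat -> nat) (j : nat) :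
  (sumN1 Nat.odd (fun i => e i + e (S i)) (2 * j) + e (2 * j + 1)
   = sumN1 Nat.even (fun i => e i + e (S i)) (2 * j) + e 1)%nat.
Proof.
  induction j as [|j IH]; [reflexivity|].
  replace (2 * S j)%nat with (S (S (2 * j))) by lia. cbn [sumN1].
  rewrite Nat.odd_succ_succ, Nat.even_succ_succ, Nat.odd_succ, Nat.even_succ,
    Nat.odd_mul, Nat.even_mul. cbn [Nat.even Nat.odd negb orb andb].
  replace (2 * j + 1)%nat with (S (2 * j)) in IH by lia.
  replace (S (S (2 * j)) + 1)%nat with (S (S (S (2 * j)))) by lia. lia.
Qed.

Lemma prodR1_parity_telescope (x E : nat -> R) (J : nat) :
  E O = 1 -> (forall j, (j < J)%nat -> x (2 * j + 1)%nat * E (S j) = E j * x (2 * j + 2)%nat) ->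
  prodR1 Nat.odd x (2 * J) * E J = prodR1 Nat.even x (2 * J).
Proof.
  intros E0 Hstep. induction J as [|j IH]; [cbn; rewrite E0; ring|].
  specialize (IH ltac:(intros; apply Hstep; lia)). specialize (Hstep j ltac:(lia)).
  replace (2 * S j)%nat with (S (S (2 * j))) by lia. cbn [prodR1].
  rewrite Nat.odd_succ_succ, Nat.even_succ_succ, Nat.odd_succ, Nat.even_succ,
    Nat.odd_mul, Nat.even_mul. cbn [Nat.even Nat.odd negb orb andb].
  replace (2 * j + 1)%nat with (S (2 * j)) in Hstep by lia.
  replace (2 * j + 2)%nat with (S (S (2 * j))) in Hstep by lia.
  rewrite <- IH, !Rmult_1_r, !Rmult_assoc, Hstep. reflexivity.
Qed.

(** * The radii [b_i] and the exponent [nu] *)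

Definition invsum (d : nat -> nat) (i : nat) : R := sum1 (fun j => 1 / INR (d j)) i.

Lemma dmax_pos (d : nat -> nat) (n : nat) : (1 <= n)%nat -> (0 < d 1%nat)%nat -> 0 < dmax d n.
Proof. intros Hn Hd. unfold dmax. apply lt_0_INR. pose proof (max1_ge d 1 n). lia. Qed.

Lemma invsum_pos (d : nat -> nat) (i : nat) :
  (forall k, (1 <= k <= i)%nat -> (0 < d k)%nat) -> (1 <= i)%nat -> 0 < invsum d i.
Proof.
  intros Hd Hi. apply sum1_pos; [|exact Hi]. intros k Hk.
  apply Rdiv_lt_0_compat; [lra|apply lt_0_INR, Hd, Hk].
Qed.

Lemma INR_gt_1_of_sum_inv_lt_1 (d : nat -> nat) (n : nat) :
  (forall i, (1 <= i <= n)%nat -> (0 < d i)%nat) -> sum1 (fun i => 1 / INR (d i)) n < 1 ->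
  forall i, (1 <= i <= n)%nat -> 1 < INR (d i).
Proof.
  intros Hd Hsum i Hi. assert (Hp : 0 < INR (d i)) by (apply lt_0_INR, Hd, Hi).
  assert (Hinv : 1 / INR (d i) < 1).
  { eapply Rle_lt_trans; [|exact Hsum].
    apply (term_le_sum1 (fun k => 1 / INR (d k))); [intros; apply one_div_INR_nonneg|exact Hi]. }
  apply Rmult_lt_compat_r with (r := INR (d i)) in Hinv; [|exact Hp].
  unfold Rdiv in Hinv. rewrite Rmult_1_l, Rinv_l in Hinv by lra. lra.
Qed.

Lemma invsum_lt_nu (d : nat -> nat) (n i : nat) :
  (forall k, (1 <= k <= n)%nat -> (0 < d k)%nat) -> 1 < INR (d n) -> (1 <= i <= n - 1)%nat ->
  invsum d i < nu d n.
Proof.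
  intros Hd Hdn Hi.
  assert (Hle : invsum d i <= invsum d (n - 1))
    by (apply sum1_le_index; [intros; apply one_div_INR_nonneg|lia]).
  assert (Hpos : 0 < invsum d (n - 1)) by (apply invsum_pos; [intros; apply Hd|]; lia).
  assert (Hfrac : 1 < INR (d n) / (INR (d n) - 1)).
  { apply Rmult_lt_reg_r with (INR (d n) - 1); [lra|].
    unfold Rdiv. rewrite Rmult_assoc, Rinv_l by lra. lra. }
  unfold nu. fold (invsum d (n - 1)). nra.
Qed.

Lemma bseq_exp (d : nat -> nat) (n : nat) (s : R) (i : nat) :
  0 < s -> 0 < dmax d n -> (1 <= i)%nat ->
  bseq d n s i
  = exp (invsum d i * (ln s + ln (tau d n)) + ln (dmax d n ^ 2) / INR (d 1%nat)).
Proof.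
  intros Hs Hm Hi. assert (Htau : 0 < tau d n) by apply exp_pos.
  assert (Hm2 : 0 < dmax d n ^ 2) by (apply pow_lt; exact Hm).
  induction i as [|[|k] IH]; [lia| |].
  - cbn [bseq]. unfold Rpower, invsum. cbn [sum1].
    assert (0 < dmax d n ^ 2 * tau d n) by (apply Rmult_lt_0_compat; assumption).
    rewrite (ln_mult (_ * _) s), (ln_mult (dmax d n ^ 2)) by assumption.
    f_equal. unfold Rdiv. ring.
  - change (bseq d n s (S (S k)))
      with (Rpower (tau d n * s) (1 / INR (d (S (S k)))) * bseq d n s (S k)).
    rewrite IH by lia. unfold Rpower, invsum. rewrite <- exp_plus, ln_mult by assumption.
    cbn [sum1]. f_equal. ring.
Qed.

Lemma bseq_pos (d : nat -> nat) (n : nat) (s : R) (i : nat) :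
  0 < s -> (1 <= n)%nat -> (0 < d 1%nat)%nat -> (1 <= i)%nat -> 0 < bseq d n s i.
Proof. intros. rewrite bseq_exp by (try apply dmax_pos; assumption). apply exp_pos. Qed.

Definition fac0 (d : nat -> nat) (n : nat) (s : R) (i : nat) : R := - bseq d n s i ^ DD d i.

(* [prodR1 Nat.even (fac0 d n s) (2 j) / prodR1 Nat.odd (fac0 d n s) (2 j)], in closed form. *)
Definition fac0_gap (d : nat -> nat) (n : nat) (s : R) (j : nat) : R :=
  exp (INR (d (2 * j + 1)%nat) * invsum d (2 * j) * (ln s + ln (tau d n))
       - (INR (d 1%nat) - INR (d (2 * j + 1)%nat)) * (ln (dmax d n ^ 2) / INR (d 1%nat))).

Lemma fac0_gap_step (d : nat -> nat) (n : nat) (s : R) (j : nat) :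
  0 < s -> 0 < dmax d n ->
  INR (d (2 * j + 1)%nat) <> 0 -> INR (d (2 * j + 2)%nat) <> 0 ->
  fac0 d n s (2 * j + 1) * fac0_gap d n s (S j) = fac0_gap d n s j * fac0 d n s (2 * j + 2).
Proof.
  intros Hs Hm H1 H2. unfold fac0, fac0_gap, DD.
  rewrite !bseq_exp, !exp_pow by (assumption || lia).
  replace (2 * S j + 1)%nat with (S (S (2 * j + 1))) by lia.
  replace (2 * j + 2)%nat with (S (2 * j + 1)) in * by lia.
  replace (2 * S j)%nat with (S (S (2 * j))) by lia.
  replace (2 * j + 1)%nat with (S (2 * j)) in * by lia.
  unfold invsum. cbn [sum1]. rewrite !plus_INR.
  rewrite <- Ropp_mult_distr_l, <- Ropp_mult_distr_r, <- !exp_plus.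
  set (K := ln (dmax d n ^ 2) / INR (d 1%nat)). do 2 f_equal. field. auto.
Qed.

Lemma sum1_div_INR (c : R) (d : nat -> nat) (m : nat) :
  sum1 (fun i => c / INR (d i)) m = c * invsum d m.
Proof. unfold invsum. induction m as [|m IH]; cbn [sum1]; [ring|rewrite IH; unfold Rdiv; ring]. Qed.

(* The exponent of [tau] is chosen exactly so that this holds. *)
Lemma d1_dn_Rpower_nu (d : nat -> nat) (n : nat) (s : R) (j : nat) :
  n = (2 * j + 1)%nat -> 0 < s -> 0 < dmax d n -> 0 < invsum d (n - 1) ->
  0 < INR (d 1%nat) -> 1 < INR (d n) ->
  INR (d 1%nat) * INR (d n) * Rpower s (nu d n) ^ (d n - 1) = fac0_gap d n s j.
Proof.
  intros En Hs Hm Hsig Hd1 Hdn. unfold fac0_gap.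
  replace (2 * j + 1)%nat with n by lia. replace (2 * j)%nat with (n - 1)%nat by lia.
  assert (Hdn1 : (1 <= d n)%nat) by (apply INR_le; simpl; lra).
  unfold Rpower at 1. rewrite exp_pow, minus_INR by exact Hdn1.
  unfold tau. rewrite ln_Rpower, sum1_div_INR, !ln_mult, ln_Rpower, ln_pow
    by (try apply Rmult_lt_0_compat; try apply exp_pos; lra).
  rewrite <- (exp_ln (INR (d 1%nat) * INR (d n))) at 1 by (apply Rmult_lt_0_compat; lra).
  rewrite <- exp_plus, ln_mult by lra. unfold nu. f_equal.
  fold (invsum d (n - 1)). simpl INR. field. lra.
Qed.

Lemma fac0_parity_ratio (d : nat -> nat) (n : nat) (s : R) :
  (3 <= n)%nat -> Nat.odd n = true -> 0 < s ->
  (forall i, (1 <= i <= n)%nat -> (0 < d i)%nat) -> 1 < INR (d n) ->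
  INR (d 1%nat) * INR (d n) * Rpower s (nu d n) ^ (d n - 1) * prodR1 Nat.odd (fac0 d n s) (n - 1)
  = prodR1 Nat.even (fac0 d n s) (n - 1).
Proof.
  intros Hn3 Hodd Hs Hd Hdn. apply Nat.odd_spec in Hodd as [j Hj].
  assert (Hm : 0 < dmax d n) by (apply dmax_pos; [|apply Hd]; lia).
  assert (Hd0 : forall i, (1 <= i <= n)%nat -> INR (d i) <> 0)
    by (intros i Hi; apply not_0_INR; specialize (Hd i Hi); lia).
  rewrite (d1_dn_Rpower_nu d n s j), Rmult_comm by
    (try apply invsum_pos; try apply lt_0_INR, Hd; intros; try apply Hd; lia || assumption).
  replace (n - 1)%nat with (2 * j)%nat by lia.
  apply prodR1_parity_telescope.
  - unfold fac0_gap, invsum. change (2 * 0 + 1)%nat with 1%nat. change (2 * 0)%nat with 0%nat.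
    cbn [sum1]. rewrite <- exp_0. f_equal. ring.
  - intros k Hk. apply fac0_gap_step; [exact Hs|exact Hm|apply Hd0; lia|apply Hd0; lia].
Qed.

(** * Factorizations of [Q_n] near infinity and near 0 *)

Definition Apoly (k : nat) (x y c : R) (z : Complex.C) : Complex.C :=
  (RtoC ((INR k - 1) * x) * z ^ k + RtoC y * z + RtoC c)%C.

Definition fac_normprod (d : nat -> nat) (n : nat) (P : nat -> bool) (u : nat -> Complex.C)
  : Complex.C := prodC1 (fun i => if P i then (1 - u i ^ DD d i)%C else C1) (n - 1).

Lemma fac_inf (d : nat -> nat) (n : nat) (s : R) (i : nat) (z : Complex.C) : z <> 0%C ->
  fac d n s i z = (z ^ DD d i * (1 - (RtoC (bseq d n s i) / z) ^ DD d i))%C.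
Proof.
  intros Hz. unfold fac, Cdiv. to_Complex. Complex_eq.
  rewrite Cpow_mult_l, Cpow_inv, <- RtoC_pow by exact Hz. field. apply Cpow_nz, Hz.
Qed.

Lemma fac_0 (d : nat -> nat) (n : nat) (s : R) (i : nat) (w : Complex.C) :
  0 < bseq d n s i ->
  fac d n s i w = (RtoC (fac0 d n s i) * (1 - (w / RtoC (bseq d n s i)) ^ DD d i))%C.
Proof.
  intros Hb. unfold fac, fac0, Cdiv. to_Complex. Complex_eq.
  rewrite Cpow_mult_l, Cpow_inv, <- !RtoC_pow, RtoC_opp by (intro E; apply RtoC_inj in E; lra).
  field. rewrite RtoC_pow. apply Cpow_nz. intro E; apply RtoC_inj in E; lra.
Qed.

Lemma sumN1_DD_parity (d : nat -> nat) (n : nat) : Nat.odd n = true ->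
  (sumN1 Nat.odd (DD d) (n - 1) + d n = sumN1 Nat.even (DD d) (n - 1) + d 1%nat)%nat.
Proof.
  intros Hodd. apply Nat.odd_spec in Hodd as [j ->].
  replace (2 * j + 1 - 1)%nat with (2 * j)%nat by lia. exact (sumN1_parity_pairs d j).
Qed.

Section FactorInf.
Variables (d : nat -> nat) (n : nat) (X Y Z W : R -> R) (s : R) (z : Complex.C).
Hypothesis Hz : z <> 0%C.

Let Pinf (P : nat -> bool) := fac_normprod d n P (fun i => RtoC (bseq d n s i) / z)%C.

Lemma prodC1_fac_inf (P : nat -> bool) :
  prodC1 (fun i => if P i then fac d n s i z else C1) (n - 1)
  = (z ^ sumN1 P (DD d) (n - 1) * Pinf P)%C.
Proof.
  rewrite (prodC1_mul P _ (fun i => z ^ DD d i)%C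
             (fun i => 1 - (RtoC (bseq d n s i) / z) ^ DD d i)%C),
    prodC1_Cpow by (intros; apply fac_inf, Hz).
  reflexivity.
Qed.

Lemma Qden_factor_inf :
  Qden d n X Y Z s z
  = (z ^ sumN1 Nat.even (DD d) (n - 1) * (Apoly (d 1%nat) (X s) (Y s) (Z s) z * Pinf Nat.even))%C.
Proof.
  unfold Qden. rewrite prodC1_fac_inf. to_Complex. unfold Apoly. Complex_eq. ring.
Qed.

Lemma Qnum_factor_inf : Nat.odd n = true ->
  Qnum d n X Y Z W s z
  = (z ^ sumN1 Nat.even (DD d) (n - 1)
     * (RtoC (INR (d 1%nat)) * z ^ d 1%nat * Pinf Nat.odd
        + RtoC (W s) * (Apoly (d 1%nat) (X s) (Y s) (Z s) z * Pinf Nat.even)))%C.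
Proof.
  intros Hodd. unfold Qnum. rewrite Qden_factor_inf, prodC1_fac_inf. to_Complex.
  replace (RtoC (INR (d 1%nat)) * (z ^ d n * (z ^ sumN1 Nat.odd (DD d) (n - 1) * Pinf Nat.odd)))%C
    with (RtoC (INR (d 1%nat)) * (z ^ (sumN1 Nat.odd (DD d) (n - 1) + d n) * Pinf Nat.odd))%C
    by (rewrite Cpow_add_r; Complex_eq; ring).
  rewrite sumN1_DD_parity, Cpow_add_r by exact Hodd. Complex_eq. ring.
Qed.

End FactorInf.

Section FactorZero.
Variables (d : nat -> nat) (n : nat) (X Y Z W : R -> R) (s : R) (w : Complex.C).
Hypothesis Hb : forall i, (1 <= i <= n - 1)%nat -> 0 < bseq d n s i.

Let P0 (P : nat -> bool) := fac_normprod d n P (fun i => w / RtoC (bseq d n s i))%C.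

Lemma prodC1_fac_0 (P : nat -> bool) :
  prodC1 (fun i => if P i then fac d n s i w else C1) (n - 1)
  = (RtoC (prodR1 P (fac0 d n s) (n - 1)) * P0 P)%C.
Proof.
  rewrite (prodC1_mul P _ (fun i => RtoC (fac0 d n s i))
             (fun i => 1 - (w / RtoC (bseq d n s i)) ^ DD d i)%C),
    prodC1_RtoC by (intros; apply fac_0, Hb; assumption).
  reflexivity.
Qed.

Lemma Qden_factor_0 :
  Qden d n X Y Z s w
  = (RtoC (prodR1 Nat.even (fac0 d n s) (n - 1))
     * (Apoly (d 1%nat) (X s) (Y s) (Z s) w * P0 Nat.even))%C.
Proof.
  unfold Qden. rewrite prodC1_fac_0. to_Complex. unfold Apoly. Complex_eq. ring.
Qed.

Lemma Qnum_factor_0 :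
  Qnum d n X Y Z W s w
  = (RtoC (INR (d 1%nat)) * w ^ d n * RtoC (prodR1 Nat.odd (fac0 d n s) (n - 1)) * P0 Nat.odd
     + RtoC (W s) * Qden d n X Y Z s w)%C.
Proof.
  unfold Qnum. rewrite prodC1_fac_0. to_Complex. Complex_eq. ring.
Qed.

End FactorZero.

Lemma Qhat_hom_scaled (d : nat -> nat) (n : nat) (X Y Z W : R -> R) (s : R) (z : Complex.C) :
  (3 <= n)%nat -> Nat.odd n = true -> (forall i, (1 <= i <= n)%nat -> (0 < d i)%nat) ->
  1 < INR (d n) -> 0 < s -> z <> 0%C ->
  let t := Rpower s (nu d n) in
  let w := (RtoC t / z)%C in
  let u := (Apoly (d 1%nat) (X s) (Y s) (Z s) w
            * fac_normprod d n Nat.even (fun i => w / RtoC (bseq d n s i)))%C in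
  exists lam : Complex.C, lam <> 0%C /\
  Qhat_hom d n X Y Z W s z
  = ((lam * (RtoC (INR (d n)) * u * z ^ d n))%C,
     (lam * (RtoC (INR (d n) * (W s / t)) * u * z ^ d n
             + fac_normprod d n Nat.odd (fun i => w / RtoC (bseq d n s i))))%C).
Proof.
  intros Hn3 Hodd Hd Hdn Hs Hz t w u.
  assert (Hb : forall i, (1 <= i <= n - 1)%nat -> 0 < bseq d n s i)
    by (intros; apply bseq_pos; try apply Hd; lia || assumption).
  assert (Ht : 0 < t) by apply exp_pos.
  assert (Hzn : (z ^ d n)%C <> 0%C) by (apply Cpow_nz, Hz).
  assert (HdnC : RtoC (INR (d n)) <> 0%C) by (intro E; apply RtoC_inj in E; lra).
  assert (HtC : RtoC t <> 0%C) by (intro E; apply RtoC_inj in E; lra).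
  set (So := prodR1 Nat.odd (fac0 d n s) (n - 1)).
  set (Se := prodR1 Nat.even (fac0 d n s) (n - 1)).
  assert (HSe : Se <> 0).
  { apply prodR1_neq_0. intros i Hi. unfold fac0.
    pose proof (pow_lt _ (DD d i) (Hb i Hi)). lra. }
  assert (Hkey := fac0_parity_ratio d n s Hn3 Hodd Hs Hd Hdn). fold t So Se in Hkey.
  assert (Htk : t ^ d n = t * t ^ (d n - 1)).
  { rewrite tech_pow_Rmult. f_equal. assert (1 < d n)%nat by (apply INR_lt; exact Hdn). lia. }
  exists (RtoC (t * Se / INR (d n)) / z ^ d n)%C. split.
  - apply Cmod_gt_0. rewrite Cmod_div by exact Hzn.
    apply Rdiv_lt_0_compat; apply Cmod_gt_0; [|exact Hzn].
    intro E. apply RtoC_inj in E. unfold Rdiv in E.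
    apply Rmult_integral in E as [E|E]; [nra|]. revert E. apply Rinv_neq_0_compat. lra.
  - unfold Qhat_hom. fold t.
    change (Cmul (RC t) (Defs.Cinv z)) with w.
    rewrite Qnum_factor_0, Qden_factor_0 by exact Hb. fold So Se u.
    unfold w at 1. unfold Cdiv at 1.
    rewrite Cpow_mult_l, Cpow_inv, <- RtoC_pow, Htk, <- Hkey by exact Hz.
    to_Complex. repeat (rewrite RtoC_mult || rewrite RtoC_div by lra).
    f_equal; Complex_eq; field; auto.
Qed.

Lemma fac_normprod_near_1 (d : nat -> nat) (n : nat) (P : nat -> bool) (u : nat -> Complex.C)
    (rho : R) :
  (forall i, (1 <= i <= n)%nat -> (0 < d i)%nat) -> 0 < rho <= 1 ->
  (forall i, (1 <= i <= n - 1)%nat -> Cmod (u i) <= rho / 2 ^ (n - 1)) ->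
  Cmod (fac_normprod d n P u - 1) <= rho.
Proof.
  intros Hd Hr Hu. apply prodC1_one_sub_pow_near_1; [exact Hr|].
  intros i Hi. split; [exact (Hu i Hi)|]. unfold DD. specialize (Hd i ltac:(lia)). lia.
Qed.

Lemma Apoly_near_hhom_den (k : nat) (x y c rho : R) (z : Complex.C) :
  (1 <= k)%nat -> Rabs (x - 1) <= rho -> Rabs y <= rho -> Rabs (c - 1) <= rho ->
  Cmod (Apoly k x y c z - snd (hhom k z)) <= INR k * rho * (Cmod z ^ k + Cmod z + 1).
Proof.
  intros Hk Hx Hy Hc. assert (Kp : 1 <= INR k) by (apply (le_INR 1); exact Hk).
  unfold Apoly. cbn [hhom snd]. to_Complex. rewrite C1_RtoC.
  replace (RtoC ((INR k - 1) * x) * z ^ k + RtoC y * z + RtoC c - (RtoC (INR k - 1) * z ^ k + 1))%C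
    with (RtoC ((INR k - 1) * (x - 1)) * z ^ k + RtoC y * z + RtoC (c - 1))%C
    by (rewrite !RtoC_mult, !RtoC_minus; ring).
  eapply Rle_trans; [apply Cmod_triangle|].
  eapply Rle_trans; [apply Rplus_le_compat_r, Cmod_triangle|].
  rewrite !Cmod_RtoC_mul, Cmod_pow, Cmod_R, Rabs_mult, (Rabs_pos_eq (INR k - 1)) by lra.
  pose proof (Cmod_ge_0_pow z k). pose proof (Cmod_ge_0 z). pose proof (Rabs_pos (x - 1)).
  assert (0 <= rho) by (pose proof (Rabs_pos y); lra).
  assert ((INR k - 1) * Rabs (x - 1) <= (INR k - 1) * rho) by (apply Rmult_le_compat_l; lra).
  assert ((INR k - 1) * Rabs (x - 1) * Cmod z ^ k <= (INR k - 1) * rho * Cmod z ^ k)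
    by (apply Rmult_le_compat_r; lra).
  assert (Rabs y * Cmod z <= rho * Cmod z) by (apply Rmult_le_compat_r; lra).
  assert (0 <= rho * Cmod z ^ k + (INR k - 1) * (rho * (Cmod z + 1)))
    by (apply Rplus_le_le_0_compat; apply Rmult_le_pos; nra).
  nra.
Qed.

Lemma Apoly_near_1 (k : nat) (x y c rho : R) (w : Complex.C) :
  (1 <= k)%nat -> rho <= 1 -> Rabs (x - 1) <= rho -> Rabs y <= rho -> Rabs (c - 1) <= rho ->
  Cmod w <= rho -> Cmod (Apoly k x y c w - 1) <= 2 * INR k * rho.
Proof.
  intros Hk Hr Hx Hy Hc Hw. assert (Kp : 1 <= INR k) by (apply (le_INR 1); exact Hk).
  unfold Apoly.
  replace (RtoC ((INR k - 1) * x) * w ^ k + RtoC y * w + RtoC c - 1)%C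
    with (RtoC ((INR k - 1) * x) * w ^ k + RtoC y * w + RtoC (c - 1))%C
    by (rewrite RtoC_minus; ring).
  eapply Rle_trans; [apply Cmod_triangle|].
  eapply Rle_trans; [apply Rplus_le_compat_r, Cmod_triangle|].
  rewrite !Cmod_RtoC_mul, Cmod_pow, Cmod_R, Rabs_mult, (Rabs_pos_eq (INR k - 1)) by lra.
  pose proof (Cmod_ge_0 w). pose proof (Rabs_pos x).
  assert (Hx2 : Rabs x <= 2).
  { replace x with ((x - 1) + 1) by ring. eapply Rle_trans; [apply Rabs_triang|].
    rewrite Rabs_R1. lra. }
  assert (Hwk : Cmod w ^ k <= rho) by (eapply Rle_trans; [apply pow_le_self|]; lra || lia).
  pose proof (Cmod_ge_0_pow w k).
  assert ((INR k - 1) * Rabs x <= (INR k - 1) * 2) by (apply Rmult_le_compat_l; lra).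
  assert ((INR k - 1) * Rabs x * Cmod w ^ k <= (INR k - 1) * 2 * rho)
    by (apply Rmult_le_compat; nra).
  assert (Rabs y * Cmod w <= rho * 1) by (apply Rmult_le_compat; try apply Rabs_pos; lra).
  nra.
Qed.

Lemma Qhom_chord_le (n : nat) (d : nat -> nat) (X Y Z W : R -> R) (s r rho : R) (z : Complex.C) :
  Nat.odd n = true -> (forall i, (1 <= i <= n)%nat -> (0 < d i)%nat) ->
  0 < s -> 0 < rho <= 1 / 3 -> 0 < r <= Cmod z ->
  Rabs (X s - 1) <= rho -> Rabs (Y s) <= rho -> Rabs (Z s - 1) <= rho -> Rabs (W s) <= rho ->
  (forall i, (1 <= i <= n - 1)%nat -> bseq d n s i / r <= rho / 2 ^ (n - 1)) ->
  chord (Qhom d n X Y Z W s z) (hhom (d 1%nat) z) <= 108 * INR (d 1%nat) * rho.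
Proof.
  intros Hodd Hd Hs Hrho Hr HX HY HZ HW Hb.
  assert (Hz : z <> 0%C) by (apply Cmod_gt_0; lra).
  assert (Hn : (1 <= n)%nat) by (destruct n; [discriminate|lia]).
  assert (Hd1 : (1 <= d 1%nat)%nat) by (apply Hd; lia).
  assert (HP : forall P, Cmod (fac_normprod d n P (fun i => RtoC (bseq d n s i) / z)%C - 1) <= rho).
  { intros P. apply fac_normprod_near_1; [exact Hd|lra|]. intros i Hi.
    eapply Rle_trans; [|apply Hb, Hi]. rewrite Cmod_div, Cmod_R by exact Hz.
    apply Rmult_le_compat; [apply Rabs_pos|apply Rlt_le, Rinv_0_lt_compat; lra| |].
    - apply Req_le, Rabs_pos_eq, Rlt_le, bseq_pos; [exact Hs|exact Hn|exact Hd1|lia].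
    - apply Rinv_le_contravar; lra. }
  unfold Qhom. rewrite Qnum_factor_inf, Qden_factor_inf, chord_scale_l
    by (exact Hz || exact Hodd || apply Cpow_nz, Hz).
  replace (108 * INR (d 1%nat) * rho) with (36 * INR (d 1%nat) * (3 * rho)) by ring.
  apply chord_hhom_perturb_num; [exact Hd1|lra|specialize (HP Nat.odd); lra|lra|].
  set (M := Cmod z ^ d 1%nat + Cmod z + 1).
  assert (HM : 0 <= M)
    by (pose proof (Cmod_ge_0 z); pose proof (Cmod_ge_0_pow z (d 1%nat)); unfold M; lra).
  assert (HA := Apoly_near_hhom_den (d 1%nat) (X s) (Y s) (Z s) rho z Hd1 HX HY HZ). fold M in HA.
  assert (HT := Cmod_hhom_den_le (d 1%nat) z Hd1). fold M in HT.
  specialize (HP Nat.even). assert (HP2 := Cmod_le_near_1 _ _ HP).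
  eapply Rle_trans; [apply Cmod_mul_sub_le|].
  assert (0 <= INR (d 1%nat) * rho * M)
    by (apply Rmult_le_pos; [apply Rmult_le_pos|]; lra || apply pos_INR).
  assert (Cmod (Apoly (d 1%nat) (X s) (Y s) (Z s) z - snd (hhom (d 1%nat) z))
          * Cmod (fac_normprod d n Nat.even (fun i => RtoC (bseq d n s i) / z)%C)
          <= INR (d 1%nat) * rho * M * 2) by (apply Rmult_le_compat; auto using Cmod_ge_0; lra).
  assert (Cmod (snd (hhom (d 1%nat) z))
          * Cmod (fac_normprod d n Nat.even (fun i => RtoC (bseq d n s i) / z)%C - 1)
          <= INR (d 1%nat) * M * rho) by (apply Rmult_le_compat; auto using Cmod_ge_0).
  lra.
Qed.

Lemma Qhat_chord_le (n : nat) (d : nat -> nat) (X Y Z W : R -> R) (s r rho : R) (z : Complex.C) :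
  (3 <= n)%nat -> Nat.odd n = true -> (forall i, (1 <= i <= n)%nat -> (0 < d i)%nat) ->
  1 < INR (d n) -> 0 < s -> 0 < rho -> 5 * INR (d 1%nat) * rho <= 1 -> 0 < r <= Cmod z ->
  Rabs (X s - 1) <= rho -> Rabs (Y s) <= rho -> Rabs (Z s - 1) <= rho ->
  Rabs (W s / Rpower s (nu d n) - (INR (d n) - 1) / INR (d n)) <= rho ->
  Rpower s (nu d n) / r <= rho ->
  (forall i, (1 <= i <= n - 1)%nat ->
     Rpower s (nu d n) / (r * bseq d n s i) <= rho / 2 ^ (n - 1)) ->
  chord (Qhat_hom d n X Y Z W s z) (hhom (d n) z) <= 180 * INR (d 1%nat) * INR (d n) * rho.
Proof.
  intros Hn3 Hodd Hd Hdn Hs Hrho Hrho1 Hr HX HY HZ HW Ht Hb.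
  assert (Hz : z <> 0%C) by (apply Cmod_gt_0; lra).
  assert (Hd1 : 1 <= INR (d 1%nat)) by (apply (le_INR 1), Hd; lia).
  assert (Hrho' : rho <= 1) by nra.
  destruct (Qhat_hom_scaled d n X Y Z W s z Hn3 Hodd Hd Hdn Hs Hz) as [lam [Hlam ->]].
  set (t := Rpower s (nu d n)) in *. set (w := (RtoC t / z)%C).
  assert (Htp : 0 < t) by apply exp_pos.
  assert (Hw : Cmod w <= rho).
  { unfold w. rewrite Cmod_div, Cmod_R, Rabs_pos_eq by (exact Hz || lra).
    eapply Rle_trans; [|exact Ht]. apply Rmult_le_compat_l; [lra|apply Rinv_le_contravar; lra]. }
  assert (HP : forall P, Cmod (fac_normprod d n P (fun i => w / RtoC (bseq d n s i))%C - 1) <= rho).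
  { intros P. apply fac_normprod_near_1; [exact Hd|lra|]. intros i Hi.
    assert (Hbi : 0 < bseq d n s i) by (apply bseq_pos; try apply Hd; lia || assumption).
    eapply Rle_trans; [|apply Hb, Hi].
    unfold w. rewrite !Cmod_div, !Cmod_R, !Rabs_pos_eq
      by (lra || exact Hz || (intro E; apply RtoC_inj in E; lra)).
    unfold Rdiv. rewrite Rinv_mult, <- Rmult_assoc.
    apply Rmult_le_compat_r; [apply Rlt_le, Rinv_0_lt_compat; lra|].
    apply Rmult_le_compat_l; [lra|apply Rinv_le_contravar; lra]. }
  rewrite chord_scale_l by exact Hlam.
  replace (180 * INR (d 1%nat) * INR (d n) * rho)
    with (36 * INR (d n) * (5 * INR (d 1%nat) * rho)) by ring.
  apply chord_hhom_perturb_den; [apply Hd; lia|nra| |specialize (HP Nat.odd); nra|].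
  - eapply Rle_trans; [apply Cmod_mul_sub_le|]. rewrite Cmod_1, Rmult_1_l.
    assert (HA := Apoly_near_1 (d 1%nat) (X s) (Y s) (Z s) rho w ltac:(apply Hd; lia)
                   Hrho' HX HY HZ Hw).
    specialize (HP Nat.even). assert (HP2 := Cmod_le_near_1 _ _ HP).
    assert (Cmod (Apoly (d 1%nat) (X s) (Y s) (Z s) w - 1)
            * Cmod (fac_normprod d n Nat.even (fun i => w / RtoC (bseq d n s i))%C)
            <= 2 * INR (d 1%nat) * rho * 2) by (apply Rmult_le_compat; auto using Cmod_ge_0; lra).
    nra.
  - replace (INR (d n) * (W s / t) - (INR (d n) - 1))
      with (INR (d n) * (W s / t - (INR (d n) - 1) / INR (d n))) by (field; lra).
    rewrite Rabs_mult, Rabs_pos_eq by lra.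
    apply Rmult_le_compat_l; [lra|]. nra.
Qed.

(** * Asymptotics as [s -> 0+] *)

Lemma at_right_0_intro (P : R -> Prop) (delta : R) :
  0 < delta -> (forall s, 0 < s < delta -> P s) -> at_right 0 P.
Proof.
  intros Hd H. exists (mkposreal delta Hd). intros y Hy Hy0.
  change (Rabs (y - 0) < delta) in Hy. apply H. rewrite Rminus_0_r, Rabs_pos_eq in Hy; lra.
Qed.

Lemma at_right_0_elim (P : R -> Prop) :
  at_right 0 P -> exists delta, 0 < delta /\ forall s, 0 < s < delta -> P s.
Proof.
  intros [[delta Hd] H]. exists delta. split; [exact Hd|]. intros s Hs. apply H; [|lra].
  change (Rabs (s - 0) < delta). rewrite Rminus_0_r, Rabs_pos_eq; lra.
Qed.

Lemma at_right_0_forall_range (P : nat -> R -> Prop) (m : nat) :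
  (forall i, (1 <= i <= m)%nat -> at_right 0 (P i)) ->
  at_right 0 (fun s => forall i, (1 <= i <= m)%nat -> P i s).
Proof.
  induction m as [|m IH]; intros H.
  - apply filter_forall. intros s i Hi. lia.
  - apply (filter_imp (fun s => (forall i, (1 <= i <= m)%nat -> P i s) /\ P (S m) s)).
    + intros s [Hle Hm] i Hi. destruct (Nat.eq_dec i (S m)) as [->|]; [exact Hm|apply Hle; lia].
    + apply filter_and; [apply IH; intros; apply H; lia|apply H; lia].
Qed.

Lemma lim0p_near (f : R -> R) (L rho : R) :
  lim0p f L -> 0 < rho -> at_right 0 (fun s => Rabs (f s - L) <= rho).
Proof.
  intros H Hr. destruct (H rho Hr) as [delta [Hd Hf]].
  apply (at_right_0_intro _ delta Hd). intros s Hs. apply Rlt_le, Hf, Hs.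
Qed.

Lemma at_right_0_exp_ln_le (c c' rho : R) :
  0 < c -> 0 < rho -> at_right 0 (fun s => exp (c * ln s + c') <= rho).
Proof.
  intros Hc Hr. apply (at_right_0_intro _ (exp ((ln rho - c') / c))); [apply exp_pos|].
  intros s [Hs Hsd]. rewrite <- (exp_ln rho Hr). apply Rlt_le, exp_increasing.
  assert (Hln : ln s < (ln rho - c') / c)
    by (rewrite <- (ln_exp ((ln rho - c') / c)); apply ln_increasing; lra).
  apply Rmult_lt_compat_l with (r := c) in Hln; [|exact Hc].
  replace (c * ((ln rho - c') / c)) with (ln rho - c') in Hln by (field; lra). lra.
Qed.

Lemma lim0p_scaled_small (f : R -> R) (nu L rho : R) :
  lim0p (fun s => f s / Rpower s nu) L -> 0 < nu -> 0 < rho ->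
  at_right 0 (fun s => Rabs (f s) <= rho).
Proof.
  intros H Hn Hr. assert (HL : 0 < Rabs L + 1) by (pose proof (Rabs_pos L); lra).
  apply (filter_imp (fun s => Rabs (f s / Rpower s nu - L) <= 1 /\
                              exp (nu * ln s + 0) <= rho / (Rabs L + 1))).
  - intros s [Hf Ht]. rewrite Rplus_0_r in Ht. fold (Rpower s nu) in Ht.
    assert (Htp : 0 < Rpower s nu) by apply exp_pos.
    assert (Rabs (f s / Rpower s nu) <= Rabs L + 1).
    { replace (f s / Rpower s nu) with ((f s / Rpower s nu - L) + L) by ring.
      eapply Rle_trans; [apply Rabs_triang|]. lra. }
    replace (f s) with (Rpower s nu * (f s / Rpower s nu)) by (field; lra).
    rewrite Rabs_mult, (Rabs_pos_eq (Rpower s nu)) by lra.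
    apply Rle_trans with (rho / (Rabs L + 1) * (Rabs L + 1)); [|right; field; lra].
    apply Rmult_le_compat; auto using Rabs_pos; lra.
  - apply filter_and; [apply lim0p_near; [exact H|lra]|].
    apply at_right_0_exp_ln_le; [exact Hn|apply Rdiv_lt_0_compat; lra].
Qed.

Lemma at_right_0_pos : at_right 0 (fun s => 0 < s).
Proof. apply (at_right_0_intro _ 1); [lra|]. intros s Hs. lra. Qed.

Lemma at_right_0_pos_imp (P : R -> Prop) :
  at_right 0 (fun s => 0 < s -> P s) -> at_right 0 P.
Proof.
  intros H. apply (filter_imp (fun s => 0 < s /\ (0 < s -> P s))); [tauto|].
  apply filter_and; [apply at_right_0_pos|exact H].
Qed.

Lemma bseq_div_eventually_le (d : nat -> nat) (n i : nat) (r rho : R) :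
  (1 <= n)%nat -> (0 < d 1%nat)%nat -> (forall k, (1 <= k <= i)%nat -> (0 < d k)%nat) ->
  (1 <= i)%nat -> 0 < r -> 0 < rho ->
  at_right 0 (fun s => bseq d n s i / r <= rho).
Proof.
  intros Hn Hd1 Hd Hi Hr Hrho. apply at_right_0_pos_imp.
  apply (filter_imp (fun s => exp (invsum d i * ln s
           + (invsum d i * ln (tau d n) + ln (dmax d n ^ 2) / INR (d 1%nat) - ln r)) <= rho)).
  - intros s Hle Hs. rewrite bseq_exp, exp_div by (try apply dmax_pos; assumption).
    eapply Rle_trans; [|exact Hle]. right. f_equal. ring.
  - apply at_right_0_exp_ln_le; [apply invsum_pos; assumption|exact Hrho].
Qed.

Lemma Rpower_nu_div_eventually_le (d : nat -> nat) (n : nat) (r rho : R) :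
  0 < nu d n -> 0 < r -> 0 < rho -> at_right 0 (fun s => Rpower s (nu d n) / r <= rho).
Proof.
  intros Hnu Hr Hrho.
  apply (filter_imp (fun s => exp (nu d n * ln s + - ln r) <= rho)).
  - intros s Hle. unfold Rpower. rewrite exp_div by exact Hr. exact Hle.
  - apply at_right_0_exp_ln_le; assumption.
Qed.

Lemma Rpower_nu_div_bseq_eventually_le (d : nat -> nat) (n i : nat) (r rho : R) :
  (1 <= n)%nat -> (0 < d 1%nat)%nat -> (1 <= i)%nat -> invsum d i < nu d n -> 0 < r -> 0 < rho ->
  at_right 0 (fun s => Rpower s (nu d n) / (r * bseq d n s i) <= rho).
Proof.
  intros Hn Hd1 Hi Hlt Hr Hrho. apply at_right_0_pos_imp.
  apply (filter_imp (fun s => exp ((nu d n - invsum d i) * ln s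
           + (- (invsum d i * ln (tau d n)) - ln (dmax d n ^ 2) / INR (d 1%nat) - ln r)) <= rho)).
  - intros s Hle Hs. rewrite bseq_exp by (try apply dmax_pos; assumption). unfold Rpower.
    rewrite Rmult_comm, Rdiv_mult_distr, exp_div, Rdiv_def, <- exp_Ropp, <- exp_plus by exact Hr.
    eapply Rle_trans; [|exact Hle]. right. f_equal. ring.
  - apply at_right_0_exp_ln_le; [lra|exact Hrho].
Qed.

Lemma locunif_conv_intro (F : R -> Complex.C -> Complex.C * Complex.C)
    (G : Complex.C -> Complex.C * Complex.C)
    (C rho0 : R) :
  0 < rho0 ->
  (forall r rho, 0 < r -> 0 < rho <= rho0 ->
     at_right 0 (fun s => forall z, r <= Cmod z -> chord (F s z) (G z) <= C * rho)) ->
  locunif_conv F G.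
Proof.
  intros Hrho0 H r Hr eps Heps.
  set (rho := Rmin rho0 (eps / (2 * (Rabs C + 1)))).
  assert (HC : 0 < Rabs C + 1) by (pose proof (Rabs_pos C); lra).
  assert (Hrho : 0 < rho <= rho0).
  { split; [apply Rmin_pos; [lra|apply Rdiv_lt_0_compat; lra]|apply Rmin_l]. }
  destruct (at_right_0_elim _ (H r rho Hr Hrho)) as [delta [Hd Hev]].
  exists delta. split; [exact Hd|]. intros s Hs z Hz _.
  rewrite Cnorm_Cmod in Hz. eapply Rle_lt_trans; [apply Hev; assumption|].
  assert (Heps2 : rho * (Rabs C + 1) <= eps / (2 * (Rabs C + 1)) * (Rabs C + 1))
    by (apply Rmult_le_compat_r; [lra|apply Rmin_r]).
  replace (eps / (2 * (Rabs C + 1)) * (Rabs C + 1)) with (eps / 2) in Heps2 by (field; lra).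
  pose proof (Rle_abs C). nra.
Qed.

Lemma Qhom_locunif_conv (n : nat) (d : nat -> nat) (X Y Z W : R -> R) (LX LY LZ LW : R) :
  Nat.odd n = true -> (forall i, (1 <= i <= n)%nat -> (0 < d i)%nat) -> 0 < nu d n ->
  lim0p (fun s => (X s - 1) / Rpower s (nu d n)) LX ->
  lim0p (fun s => Y s / Rpower s (nu d n)) LY ->
  lim0p (fun s => (Z s - 1) / Rpower s (nu d n)) LZ ->
  lim0p (fun s => W s / Rpower s (nu d n)) LW ->
  locunif_conv (Qhom d n X Y Z W) (hhom (d 1%nat)).
Proof.
  intros Hodd Hd Hnu LimX LimY LimZ LimW.
  assert (Hn : (1 <= n)%nat) by (destruct n; [discriminate|lia]).
  apply (locunif_conv_intro _ _ (108 * INR (d 1%nat)) (1 / 3)); [lra|].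
  intros r rho Hr Hrho.
  apply (filter_imp (fun s => 0 < s /\
           ((Rabs (X s - 1) <= rho /\ Rabs (Y s) <= rho) /\
            (Rabs (Z s - 1) <= rho /\ Rabs (W s) <= rho)) /\
           (forall i, (1 <= i <= n - 1)%nat -> bseq d n s i / r <= rho / 2 ^ (n - 1)))).
  - intros s [Hs [[[HX HY] [HZ HW]] Hb]] z Hz.
    apply (Qhom_chord_le n d X Y Z W s r rho z); auto; lra.
  - assert (H2 : 0 < rho / 2 ^ (n - 1)) by (apply Rdiv_lt_0_compat; [lra|apply pow_lt; lra]).
    repeat apply filter_and; try apply at_right_0_pos.
    + apply (lim0p_scaled_small _ _ _ _ LimX); lra.
    + apply (lim0p_scaled_small _ _ _ _ LimY); lra.
    + apply (lim0p_scaled_small _ _ _ _ LimZ); lra.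
    + apply (lim0p_scaled_small _ _ _ _ LimW); lra.
    + apply at_right_0_forall_range. intros i Hi.
      apply bseq_div_eventually_le; try apply Hd; try intros; try apply Hd; lia || assumption.
Qed.

Lemma Qhat_locunif_conv (n : nat) (d : nat -> nat) (X Y Z W : R -> R) (LX LY LZ : R) :
  (3 <= n)%nat -> Nat.odd n = true -> (forall i, (1 <= i <= n)%nat -> (0 < d i)%nat) ->
  1 < INR (d n) -> 0 < nu d n -> (forall i, (1 <= i <= n - 1)%nat -> invsum d i < nu d n) ->
  lim0p (fun s => (X s - 1) / Rpower s (nu d n)) LX ->
  lim0p (fun s => Y s / Rpower s (nu d n)) LY ->
  lim0p (fun s => (Z s - 1) / Rpower s (nu d n)) LZ ->
  lim0p (fun s => W s / Rpower s (nu d n)) ((INR (d n) - 1) / INR (d n)) ->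
  locunif_conv (Qhat_hom d n X Y Z W) (hhom (d n)).
Proof.
  intros Hn3 Hodd Hd Hdn Hnu Hsig LimX LimY LimZ LimW.
  assert (Hd1 : 1 <= INR (d 1%nat)) by (apply (le_INR 1), Hd; lia).
  apply (locunif_conv_intro _ _ (180 * INR (d 1%nat) * INR (d n)) (1 / (5 * INR (d 1%nat))));
    [apply Rdiv_lt_0_compat; lra|].
  intros r rho Hr Hrho.
  assert (Hrho5 : 5 * INR (d 1%nat) * rho <= 1).
  { assert (Hle : 5 * INR (d 1%nat) * rho <= 5 * INR (d 1%nat) * (1 / (5 * INR (d 1%nat))))
      by (apply Rmult_le_compat_l; lra).
    replace (5 * INR (d 1%nat) * (1 / (5 * INR (d 1%nat)))) with 1 in Hle by (field; lra).
    exact Hle. }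
  apply (filter_imp (fun s => 0 < s /\
           ((Rabs (X s - 1) <= rho /\ Rabs (Y s) <= rho) /\
            (Rabs (Z s - 1) <= rho /\
             Rabs (W s / Rpower s (nu d n) - (INR (d n) - 1) / INR (d n)) <= rho)) /\
           Rpower s (nu d n) / r <= rho /\
           (forall i, (1 <= i <= n - 1)%nat ->
              Rpower s (nu d n) / (r * bseq d n s i) <= rho / 2 ^ (n - 1)))).
  - intros s [Hs [[[HX HY] [HZ HW]] [Ht Hb]]] z Hz.
    apply (Qhat_chord_le n d X Y Z W s r rho z); auto; lra.
  - assert (H2 : 0 < rho / 2 ^ (n - 1)) by (apply Rdiv_lt_0_compat; [lra|apply pow_lt; lra]).
    repeat apply filter_and; try apply at_right_0_pos.
    + apply (lim0p_scaled_small _ _ _ _ LimX); lra.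
    + apply (lim0p_scaled_small _ _ _ _ LimY); lra.
    + apply (lim0p_scaled_small _ _ _ _ LimZ); lra.
    + apply lim0p_near; [exact LimW|lra].
    + apply Rpower_nu_div_eventually_le; lra.
    + apply at_right_0_forall_range. intros i Hi.
      apply Rpower_nu_div_bseq_eventually_le; try apply Hd; try apply Hsig; lia || assumption.
Qed.

Theorem lemma3p4 (n : nat) (d : nat -> nat) (X Y Z W : R -> R) (s0 : R) :
  (3 <= n)%nat -> Nat.odd n = true ->
  (forall i, (1 <= i <= n)%nat -> (0 < d i)%nat) ->
  sum1 (fun i => 1 / INR (d i)) n < 1 ->
  0 < s0 ->
  (forall s, 0 < s < s0 ->
     let t := Rpower s (nu d n) in
     fst (Qden d n X Y Z s (RC 1)) <> 0 /\
     Qreal d n X Y Z W s 1 = 1 /\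
     derivable_pt_lim (Qreal d n X Y Z W s) 1 1 /\
     fst (Qden d n X Y Z s (RC t)) <> 0 /\
     Qreal d n X Y Z W s t = t /\
     derivable_pt_lim (Qreal d n X Y Z W s) t 1) ->
  lim0p (fun s => (X s - 1) / Rpower s (nu d n))
        (INR (d 1%nat) * (INR (d 1%nat) - 3) * (INR (d n) - 1)
         / ((INR (d 1%nat) - 1) ^ 2 * INR (d n))) ->
  lim0p (fun s => Y s / Rpower s (nu d n))
        (2 * INR (d 1%nat) * (INR (d n) - 1) / ((INR (d 1%nat) - 1) * INR (d n))) ->
  lim0p (fun s => (Z s - 1) / Rpower s (nu d n)) 0 ->
  lim0p (fun s => W s / Rpower s (nu d n)) ((INR (d n) - 1) / INR (d n)) ->
  locunif_conv (Qhom d n X Y Z W) (hhom (d 1%nat)) /\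
  locunif_conv (Qhat_hom d n X Y Z W) (hhom (d n)).
Proof.
  intros Hn3 Hodd Hd Hsum _ _ LimX LimY LimZ LimW.
  assert (Hdn : 1 < INR (d n)) by (apply (INR_gt_1_of_sum_inv_lt_1 d n Hd Hsum); lia).
  assert (Hsig : forall i, (1 <= i <= n - 1)%nat -> invsum d i < nu d n)
    by (intros; apply invsum_lt_nu; assumption).
  assert (Hnu : 0 < nu d n).
  { apply Rlt_trans with (invsum d 1); [|apply Hsig; lia].
    apply invsum_pos; [intros; apply Hd|]; lia. }
  split.
  - exact (Qhom_locunif_conv n d X Y Z W _ _ _ _ Hodd Hd Hnu LimX LimY LimZ LimW).
  - exact (Qhat_locunif_conv n d X Y Z W _ _ _ Hn3 Hodd Hd Hdn Hnu Hsig LimX LimY LimZ LimW).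
Qed.
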